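(* Let $C: f=0$ be a reduced plane curve of degree $d\geq 3$ in $\mathbb{P}^2$ of type $(d,r,m)$ with $m>3$, and suppose $\Delta m:=(2r-d+3)-m=3$. Then, with $\epsilon_1,\ldots,\epsilon_{m-2}$ as in the context, one of the following holds: (1) $\epsilon_{m-2}=4$, $\epsilon_j=1$ for $1\leq j\leq m-3$, and $\tau(C)=\frac{d(d-1)}{2}-6+r(d-r-2)$; (2) $\epsilon_{m-2}=3$, $\epsilon_{m-3}=2$, $\epsilon_j=1$ for $1\leq j\leq m-4$, and $\tau(C)=\frac{d(d-1)}{2}-4+r(d-r-2)$; (3) $\epsilon_{m-2}=\epsilon_{m-3}=\epsilon_{m-4}=2$, $\epsilon_j=1$ for $1\leq j\leq m-5$, and $\tau(C)=\frac{d(d-1)}{2}-3+r(d-r-2)$.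
   Context: Let $S=\mathbb{C}[x,y,z]$, let $f\in S$ be a reduced homogeneous polynomial of degree $d\geq 3$ defining $C$, and assume $C$ is not a union of $d$ lines through one point. Let $J_f=(f_x,f_y,f_z)$ and $M(f)=S/J_f$. Let $D_0(f)=\{(a,b,c)\in S^3: af_x+bf_y+cf_z=0\}$. The curve is of type $(d,r,m)$ if $D_0(f)$ is minimally generated by $m$ homogeneous elements all of degree $r$. When $m\geq 3$, the minimal graded free resolution of $M(f)$ has the form $$0\to \bigoplus_{i=1}^{m-2}S(-e_i)\to \bigoplus_{j=1}^m S(1-d-r)\to S^3(1-d)\to S,$$ with $e_1\leq\cdots\leq e_{m-2}$, and one writes $e_j=d+r-1+\epsilon_j$ with integers $\epsilon_j\geq 1$. The total Tjurina number $\tau(C)$ is the degree of $J_f$, i.e. the sum of the Tjurina numbers of the singular points of $C$. *)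

From HB Require Import structures.
From mathcomp Require Import all_boot all_algebra.
From mathcomp Require Import reals complex.
From mathcomp Require Import mpoly.

Unset Printing Implicit Defensive.

Import GRing.Theory.
Local Open Scope ring_scope.

(* Plane curves C : f = 0 with f in S = F[x,y,z] = {mpoly F[3]},
   variables x,y,z = 'X_0,'X_1,'X_2.  The theorem is stated for F = C,
   realized as R[i] for an arbitrary realType R. *)

Section CurveDefs.
Context {F : fieldType}.
Local Notation S := {mpoly F[3]}.

Definition reduced (f : S) : Prop :=
  f != 0 /\ forall g h : S, f = g * g * h -> (msize g <= 1)%N.

Definition lines_through_point (f : S) (d : nat) : Prop :=
  exists p : 'I_3 -> F, (exists t, p t != 0) /\
  exists l : 'I_d -> S,
    (forall i, l i \is 1.-homog) /\ (forall i, (l i).@[p] = 0) /\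
    f = \prod_(i < d) l i.

Definition hom_vec {n : nat} (k : nat) (v : 'I_n -> S) : Prop :=
  forall t, v t \is k.-homog.

Definition in_submod {n k : nat} (g : 'I_k -> 'I_n -> S) (v : 'I_n -> S) :=
  exists h : 'I_k -> S, forall t, v t = \sum_(j < k) h j * g j t.

Definition generates {n k : nat} (P : ('I_n -> S) -> Prop)
  (g : 'I_k -> 'I_n -> S) : Prop :=
  (forall j, P (g j)) /\ (forall v, P v -> in_submod g v).

Definition irredundant {n k : nat} (g : 'I_k -> 'I_n -> S) : Prop :=
  forall i : 'I_k, ~ exists h : 'I_k -> S,
      h i = 0 /\ forall t, g i t = \sum_(j < k) h j * g j t.

Definition D0 (f : S) (v : 'I_3 -> S) : Prop :=
  \sum_(t < 3) v t * mderiv t f = 0.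

Definition min_gens_D0 (f : S) (r m : nat) (rho : 'I_m -> 'I_3 -> S) : Prop :=
  generates (D0 f) rho /\ irredundant rho /\ forall j, hom_vec r (rho j).

Definition curve_type (f : S) (d r m : nat) : Prop :=
  f \is d.-homog /\ exists rho, min_gens_D0 f r m rho.

Definition syz {n k : nat} (g : 'I_k -> 'I_n -> S) (s : 'I_k -> S) : Prop :=
  forall t, \sum_(j < k) s j * g j t = 0.

Definition in_jac (f : S) (p : S) : Prop :=
  exists g : 'I_3 -> S, p = \sum_(t < 3) g t * mderiv t f.

(* dim_F (S/J_f)_k = n : there are n forms of degree k whose classes form
   a basis of (S/J_f)_k *)
Definition quot_dim (f : S) (k n : nat) : Prop :=
  exists q : 'I_n -> S,
    (forall i, q i \is k.-homog) /\
    (forall p : S, p \is k.-homog ->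
       exists c : 'I_n -> F, in_jac f (p - \sum_(i < n) c i *: q i)) /\
    (forall c : 'I_n -> F, in_jac f (\sum_(i < n) c i *: q i) ->
       forall i, c i = 0).

(* total Tjurina number = degree of J_f = eventual value of the Hilbert
   function of M(f) = S/J_f *)
Definition tjurina_number (f : S) (tau : nat) : Prop :=
  exists k0, forall k, (k0 <= k)%N -> quot_dim f k tau.

End CurveDefs.

(* In each degree p the Jacobian syzygies give an exact sequence of
   graded pieces
     0 -> (+)_j S_(p - eps_j) -> S_p^m -> S_(p + r)^3 -> S_(p + r + d - 1)
       -> M(f)_(p + r + d - 1) -> 0:
   exactness in the middle holds because rho generates D_0(f) and sigma
   generates the syzygies of rho, and injectivity on the left is forced by
   the Hilbert function of M(f) being eventually tau, since a nonzero
   relation among the sigma_j would make it grow quadratically.  For large p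
   the alternating sum of dimensions is a polynomial identity in p.  Its
   linear coefficient gives sum_j eps_j = 2r - d + 1 = (m - 2) + 3, and its
   constant term expresses tau through sum_j eps_j^2.  As the eps_j are
   positive and nondecreasing, the excess 3 sits on the last parts as
   3, 1 + 2 or 1 + 1 + 1, which gives the three cases. *)

From HB Require Import structures.
From mathcomp Require Import all_boot all_algebra.
From mathcomp Require Import reals complex.
From mathcomp Require Import mpoly.
From mathcomp Require Import zify.

(** * Nondecreasing partitions and binomial arithmetic *)

Lemma leq_sum_nat_const (F : nat -> nat) a b c :
  (forall i, a <= i < b -> c <= F i) -> (b - a) * c <= \sum_(a <= i < b) F i.
Proof.
move=> le_cF; rewrite -sum_nat_const_nat big_nat_cond [leqRHS]big_nat_cond.
by apply: leq_sum => i /andP[/le_cF].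
Qed.

Lemma sum_nat_eq_const (F : nat -> nat) a b c :
  (forall i, a <= i < b -> F i = c) -> \sum_(a <= i < b) F i = (b - a) * c.
Proof. by move=> Fc; rewrite -sum_nat_const_nat; apply: eq_big_nat. Qed.

Section NondecreasingPartition.
Context {e : nat -> nat} {n : nat}.
Hypothesis e_nondecr : forall i j, i <= j -> j < n -> e i <= e j.
Hypothesis e_gt0 : forall j, j < n -> 0 < e j.

(* If [e j >= 2] then so is every later part, which costs [n - j] in excess. *)
Lemma partition_excess_ones k : \sum_(0 <= j < n) e j = n + k ->
  forall j, j + k < n -> e j = 1.
Proof.
move=> sum_e j lt_jn; have := e_gt0 j ltac:(lia).
case: (leqP (e j) 1) => [? ? | e_j_gt1 _]; first by lia.
move: sum_e; rewrite (@big_cat_nat _ _ _ j) //=; last by lia.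
have low := @leq_sum_nat_const e 0 j 1.
have high := @leq_sum_nat_const e j n 2.
suff: (j - 0) * 1 + (n - j) * 2
       <= \sum_(0 <= i < j) e i + \sum_(j <= i < n) e i by lia.
apply: leq_add; [apply: low | apply: high] => i /andP[le_i lt_i].
  by apply: e_gt0; lia.
by apply: leq_trans e_j_gt1 _; apply: e_nondecr; lia.
Qed.

Lemma partition_excess3 : 2 <= n -> \sum_(0 <= j < n) e j = n + 3 ->
  (e (n - 1) = 4 /\ (forall j, j < n - 1 -> e j = 1)
     /\ \sum_(0 <= j < n) e j ^ 2 = n + 15)
  \/ (e (n - 1) = 3 /\ e (n - 2) = 2 /\ (forall j, j < n - 2 -> e j = 1)
     /\ \sum_(0 <= j < n) e j ^ 2 = n + 11)
  \/ (3 <= n /\ e (n - 1) = 2 /\ e (n - 2) = 2 /\ e (n - 3) = 2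
     /\ (forall j, j < n - 3 -> e j = 1) /\ \sum_(0 <= j < n) e j ^ 2 = n + 9).
Proof.
move=> n_ge2 sum_e; have ones := partition_excess_ones 3 sum_e.
have mono i j : i <= j < n -> e i <= e j by case/andP; apply: e_nondecr.
have pos j : j < n -> 0 < e j := e_gt0 j.
clear e_nondecr e_gt0; move: sum_e ones mono pos.
case: n n_ge2 => [|[|[|k]]] // _ sum_e ones mono pos.
- rewrite !big_nat_recr //= !big_geq // in sum_e *.
  rewrite !subSS !subn0 sub0n.
  have le_e01 := mono 0 1 erefl; have e0_gt0 := pos 0 erefl.
  have [e0 | e0] : e 0 = 1 \/ e 0 = 2 by lia.
    by left; rewrite e0; split; [lia | split; [case | lia]].
  by right; left; rewrite e0; split; [lia | split; [done | split; [case | lia]]].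
have sum_head : \sum_(0 <= j < k) e j = k.
  rewrite (@sum_nat_eq_const _ _ _ 1) ?muln1 ?subn0 // => j /andP[_ ?].
  by apply: ones; lia.
have sq_head : \sum_(0 <= j < k) e j ^ 2 = k.
  rewrite (@sum_nat_eq_const _ _ _ 1) ?muln1 ?subn0 // => j /andP[_ ?].
  by rewrite ones //; lia.
rewrite !big_nat_recr //= sum_head sq_head in sum_e *.
have le_ek01 := mono k k.+1 ltac:(lia); have le_ek12 := mono k.+1 k.+2 ltac:(lia).
have ek_gt0 := pos k ltac:(lia); rewrite !subSS !subn0.
have low j (lt_jk : j < k) : e j = 1 by apply: ones; lia.
have [[ek ek1] | [[ek ek1] | [ek ek1]]] :
    [/\ e k = 1 & e k.+1 = 1] \/ [/\ e k = 1 & e k.+1 = 2]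
    \/ [/\ e k = 2 & e k.+1 = 2].
- by lia.
- left; split; first by lia.
  split; last by rewrite ek ek1; lia.
  move=> j lt_j; have [/low // | le_kj] := ltnP j k.
  by have [-> | ->] : j = k \/ j = k.+1 by lia.
- right; left; split; first by lia.
  split; first by [].
  split; last by rewrite ek ek1; lia.
  move=> j lt_j; have [/low // | le_kj] := ltnP j k.
  by have -> : j = k by lia.
- right; right; split; first by [].
  split; first by lia.
  by do 2 (split; first by []); split; [exact: low | rewrite ek ek1; lia].
Qed.

End NondecreasingPartition.

Lemma double_bin_add2 x : 2 * 'C(x + 2, x) = (x + 2) * (x + 1).
Proof.
rewrite -[X in 'C(_, X)](addnK 2 x) bin_sub ?leq_addl // mul_bin_left bin1.
by rewrite mulnC; congr (_ * _); lia.
Qed.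

Lemma leq_bin_add2 {x y} : x <= y -> 'C(x + 2, x) <= 'C(y + 2, y).
Proof.
move=> le_xy; rewrite -(leq_pmul2l (isT : 0 < 2)) !double_bin_add2.
by apply: leq_mul; rewrite leq_add2r.
Qed.

Lemma double_bin_add2_sub p e : e <= p ->
  2 * 'C(p - e + 2, p - e) + (2 * p + 3) * e = (p + 2) * (p + 1) + e ^ 2.
Proof.
move=> le_ep; rewrite double_bin_add2.
have -> : p = p - e + e by rewrite subnK.
rewrite addnK; move: (p - e) => x; lia.
Qed.

(* Doubled, the claim reads [A + 6 r q < (q + 2) (q + 1)] with [A] below. *)
Lemma bin_add2_outgrows tau r c : exists q,
  tau + 3 * 'C(c + q + r + 2, c + q + r)
  < 'C(q + 2, q) + 3 * 'C(c + q + 2, c + q).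
Proof.
set A := 2 * tau + 3 * r * (2 * c + r + 3); exists (A + 6 * r).
rewrite -(ltn_pmul2l (isT : 0 < 2)) mulnDr mulnDr !mulnA !(mulnC 2 3) -!mulnA.
rewrite !double_bin_add2; set q := A + 6 * r.
have : A + 6 * r * q <= q * q by rewrite /q; nia.
rewrite /A; nia.
Qed.

(* Two consecutive values determine the linear and constant coefficients of
   the identity, whose quadratic terms cancel. *)
Lemma hilbert_polynomial_coeffs {tau r D E1 E2 P} :
  (forall p, P <= p ->
    2 * tau + 3 * ((p + r + 2) * (p + r + 1)) + E2
    = (p + r + D + 2) * (p + r + D + 1) + 2 * ((p + 2) * (p + 1))
      + (2 * p + 3) * E1) ->
  E1 + D = 2 * r /\
  2 * tau + 3 * ((r + 2) * (r + 1)) + E2 = (r + D + 2) * (r + D + 1) + 4 + 3 * E1.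
Proof.
move=> id; have id0 := id P (leqnn P); have id1 := id P.+1 (leqnSn P).
have coeff : E1 + D = 2 * r by nia.
by split=> //; nia.
Qed.

Import GRing.Theory.
Local Open Scope ring_scope.

(** * Dimension of a sum of images *)

Section SumOfImages.
Context {K : fieldType}.

Lemma dim_lker_limg {W V : vectType K} (h : 'Hom(W, V)) :
  (\dim (lker h) + \dim (limg h))%N = dim W.
Proof. by rewrite -dimvf -(limg_ker_dim h fullv) capvC capvf. Qed.

Context {I : finType} {U : I -> vectType K} {V : vectType K}.
Variable mu : forall i, 'Hom(U i, V).

Lemma dimv_sum_limg_free :
  (forall u : forall i, U i, \sum_i mu i (u i) = 0 -> forall i, u i = 0) ->
  \dim (\sum_i limg (mu i)) = (\sum_i dim (U i))%N.
Proof.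
move=> mu_free.
have mu_inj i : lker (mu i) = 0%VS.
  apply/eqP; rewrite -subv0; apply/subvP => x.
  rewrite memv_ker memv0 => /eqP mu_x.
  suff : dfwith (fun j => 0 : U j) x i = 0 by rewrite dfwith_in => ->.
  apply: mu_free.
  rewrite (bigD1 i) //= dfwith_in mu_x add0r big1 // => j /negbTE j_ne.
  by rewrite dfwith_out ?linear0 // eq_sym j_ne.
have /directvP-> : directv (\sum_i limg (mu i)).
  apply/directv_sum_independent => us us_img us_sum i _.
  have usE j : us j = mu j ((mu j)^-1%VF (us j)) by rewrite limg_lfunVK ?us_img.
  rewrite usE (mu_free (fun j => (mu j)^-1%VF (us j))) ?linear0 //.
  by rewrite -[RHS]us_sum; apply: eq_bigr => j _; rewrite -usE.
by apply: eq_bigr => i _; rewrite /= limg_dim_eq ?mu_inj ?capv0 ?dimvf.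
Qed.

Lemma dimv_sum_limg_relation (W : vectType K) (nu : forall i, 'Hom(W, U i)) i0 :
  (forall w, \sum_i mu i (nu i w) = 0) -> lker (mu i0 \o nu i0)%VF = 0%VS ->
  (\dim (\sum_i limg (mu i)) + dim W <= \sum_i dim (U i))%N.
Proof.
move=> rel inj.
set X := limg (mu i0); set Rest := (\sum_(i | i != i0) limg (mu i))%VS.
have dim_Y : \dim (limg (mu i0 \o nu i0)) = dim W.
  by rewrite limg_dim_eq ?inj ?capv0 ?dimvf.
have Y_sub : (limg (mu i0 \o nu i0) <= X :&: Rest)%VS.
  apply/subvP => _ /memv_imgP[w _ ->]; rewrite memv_cap comp_lfunE.
  rewrite memv_img ?memvf //=.
  have := rel w; rewrite (bigD1 i0) //= => /eqP; rewrite addr_eq0 => /eqP->.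
  by rewrite memvN; apply: memv_sumr => i _; apply: memv_img; apply: memvf.
have dim_img i : (\dim (limg (mu i)) <= dim (U i))%N.
  by rewrite -dimvf -(limg_ker_dim (mu i) fullv) leq_addl.
rewrite (bigD1 i0) //= [leqRHS](bigD1 i0) //= -/X -/Rest -dim_Y.
apply: leq_trans (_ : \dim X + \dim Rest <= _)%N.
  by rewrite -[leqRHS]dimv_sum_cap leq_add2l dimvS.
apply: leq_add; first exact: dim_img.
apply: leq_trans (dimv_leq_sum _ _ _) _.
by apply: leq_sum => i _; apply: dim_img.
Qed.

End SumOfImages.

(** * Graded pieces of F[x, y, z] *)

Section GradedPieces.
Context {F : fieldType}.
Local Notation S := {mpoly F[3]}.
Local Notation H k := (dhomog 3 F k).

Lemma dim_ffun_dhomog n k : dim {ffun 'I_n -> H k} = (n * 'C(k + 2, k))%N.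
Proof. by rewrite -[n in RHS]card_ord. Qed.

Lemma pihomogMr k {e : nat} (g : S) {h : S} : h \is e.-homog ->
  pihomog mdeg k (g * h) = if (e <= k)%N then pihomog mdeg (k - e) g * h else 0.
Proof.
move=> h_e; rewrite {1}(mpolyE g) mulr_suml linear_sum /=.
have Xh_homog mm : 'X_[mm] * h \is (mdeg mm + e).-homog.
  by apply: dhomogM => //; rewrite dhomogX.
case: ifP => le_ek.
  rewrite [in RHS](mpolyE g) linear_sum mulr_suml /=; apply: eq_bigr => mm _.
  rewrite -scalerAl !linearZ /= pihomogX.
  have [deg_k | deg_ne] := eqVneq (mdeg mm + e)%N k.
    rewrite pihomog_dE; last by rewrite -deg_k.
    have -> : (mdeg mm == k - e)%N by apply/eqP; lia.
    by rewrite scalerAl.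
  rewrite (pihomog_ne0 deg_ne (Xh_homog mm)).
  have -> : (mdeg mm == k - e)%N = false by apply/negbTE/eqP; lia.
  by rewrite scaler0 mul0r.
apply: big1 => mm _; rewrite -scalerAl linearZ /=.
have deg_ne : (mdeg mm + e)%N != k by apply/eqP; lia.
by rewrite (pihomog_ne0 deg_ne (Xh_homog mm)) scaler0.
Qed.

Lemma mderiv_homog d (f : S) t : f \is d.-homog -> mderiv t f \is d.-1.-homog.
Proof.
move=> f_d; rewrite (mpolyE f) linear_sum /= big_seq.
apply: rpred_sum => mm mm_supp; rewrite mderivZ /= mderivX; apply: rpredZ.
have [-> | mm_t_gt0] := posnP (mm t); first by rewrite scale0r rpred0.
apply: rpredZ; rewrite dhomogX; apply/eqP.
have le_U : (U_(t) <= mm)%MM.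
  by apply/mnm_lepP => i; rewrite mnm1E; case: eqP => [<-|].
have := congr1 mdeg (submK le_U).
by rewrite mdegD mdeg1 (dhomog_mf f_d mm_supp) addn1 => <-.
Qed.

(* Take the components of degree [b - e j] of arbitrary coefficients. *)
Lemma in_submod_homog {k n} {g : 'I_k -> 'I_n -> S} {e : 'I_k -> nat} {b}
    {v : 'I_n -> S} :
  (forall j t, g j t \is (e j).-homog) -> (forall t, v t \is b.-homog) ->
  in_submod g v ->
  exists h : 'I_k -> S, (forall j, h j \is (b - e j)%N.-homog) /\
                        forall t, v t = \sum_(j < k) h j * g j t.
Proof.
move=> g_homog v_homog [h v_eq].
exists (fun j => if (e j <= b)%N then pihomog mdeg (b - e j) (h j) else 0).
split=> [j | t]; first by case: ifP => _; [exact: pihomogP | exact: rpred0].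
rewrite -(pihomog_dE (v_homog t)) v_eq linear_sum /=; apply: eq_bigr => j _.
by rewrite (pihomogMr _ _ (g_homog j t)); case: ifP; rewrite ?mul0r.
Qed.

(* Multiplication by [c] followed by projection to degree [b], so that it is
   defined for every [c]; it is the plain product when [c] has degree [b - a]. *)
Definition mul_dhomog (c : S) a b (g : H a) : H b :=
  DHomog (pihomogP mdeg b (val g * c)).

Lemma mul_dhomog_is_linear c a b : linear (mul_dhomog c a b).
Proof.
by move=> x g g'; apply: val_inj; rewrite /= mulrDl -scalerAl linearP.
Qed.

HB.instance Definition _ c a b :=
  GRing.isLinear.Build F (H a) (H b) _ (mul_dhomog c a b)
    (mul_dhomog_is_linear c a b).

Lemma mul_dhomogE {c e a b} (g : H a) : c \is e.-homog -> (a + e = b)%N ->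
  val (mul_dhomog c a b g) = val g * c.
Proof.
by move=> c_e <-; apply: pihomog_dE (dhomogM (dhomog_is_dhomog g) c_e).
Qed.

Section Maps.
Context {k n : nat}.

Definition mul_row (c : 'I_n -> S) a b (g : H a) : {ffun 'I_n -> H b} :=
  [ffun t => mul_dhomog (c t) a b g].

Lemma mul_row_is_linear c a b : linear (mul_row c a b).
Proof. by move=> x g g'; apply/ffunP => t; rewrite !ffunE linearP. Qed.

HB.instance Definition _ c a b :=
  GRing.isLinear.Build F (H a) {ffun 'I_n -> H b} _ (mul_row c a b)
    (mul_row_is_linear c a b).

Definition mul_mx (A : 'I_k -> 'I_n -> S) a b (h : {ffun 'I_k -> H a}) :
  {ffun 'I_n -> H b} := \sum_j mul_row (A j) a b (h j).

Lemma mul_mx_is_linear A a b : linear (mul_mx A a b).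
Proof.
move=> x h h'; rewrite /mul_mx scaler_sumr -big_split /=.
by apply: eq_bigr => j _; rewrite !ffunE linearP.
Qed.

HB.instance Definition _ A a b :=
  GRing.isLinear.Build F {ffun 'I_k -> H a} {ffun 'I_n -> H b} _ (mul_mx A a b)
    (mul_mx_is_linear A a b).

Lemma mul_rowE {c e a b} (g : H a) t : c t \is e.-homog -> (a + e = b)%N ->
  val (mul_row c a b g t) = val g * c t.
Proof. by rewrite ffunE; apply: mul_dhomogE. Qed.

Lemma mul_mxE {A : 'I_k -> 'I_n -> S} {e a b} (h : {ffun 'I_k -> H a}) t :
  (forall j, A j t \is e.-homog) -> (a + e = b)%N ->
  val (mul_mx A a b h t) = \sum_j val (h j) * A j t.
Proof.
move=> A_e ab; rewrite /mul_mx sum_ffunE raddf_sum /=.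
by apply: eq_bigr => j _; apply: mul_rowE.
Qed.

Lemma limg_mul_mx A a b :
  limg (linfun (mul_mx A a b)) = (\sum_j limg (linfun (mul_row (A j) a b)))%VS.
Proof.
apply/vspaceP => v; apply/idP/idP.
  case/memv_imgP => h _ ->; rewrite lfunE /=.
  by apply: memv_sumr => j _; rewrite -[mul_row _ _ _ _]lfunE memv_img ?memvf.
case/memv_sumP => us us_img ->; apply: rpred_sum => j _.
have [g _ ->] := memv_imgP (us_img j isT); rewrite lfunE /=.
pose h : {ffun 'I_k -> H a} := [ffun i => if i == j then g else 0].
have -> : mul_row (A j) a b g = mul_mx A a b h.
  rewrite /mul_mx (bigD1 j) //= big1 => [|i /negbTE i_ne].
    by rewrite ffunE eqxx addr0.
  by rewrite ffunE i_ne linear0.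
by rewrite -lfunE memv_img ?memvf.
Qed.

Lemma mem_lker_mul_mx {A : 'I_k -> 'I_n -> S} {e a b} {h : {ffun 'I_k -> H a}} :
  (forall j t, A j t \is e.-homog) -> (a + e = b)%N ->
  reflect (syz A (fun j => val (h j))) (h \in lker (linfun (mul_mx A a b))).
Proof.
move=> A_e ab; rewrite memv_ker lfunE /=; apply: (iffP eqP) => [h0 t | syz_h].
  by rewrite -(mul_mxE h t (A_e^~ t) ab) h0 ffunE.
apply/ffunP => t; apply: val_inj.
by rewrite (mul_mxE h t (A_e^~ t) ab) syz_h ffunE.
Qed.

Lemma mem_sum_limg_mul_row {g : 'I_k -> 'I_n -> S} {a e : 'I_k -> nat} {b}
    {v : {ffun 'I_n -> H b}} :
  (forall j t, g j t \is (e j).-homog) -> (forall j, a j + e j = b)%N ->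
  reflect (in_submod g (fun t => val (v t)))
    (v \in (\sum_j limg (linfun (mul_row (g j) (a j) b)))%VS).
Proof.
move=> g_e ab; apply: (iffP idP).
  case/memv_sumP => us us_img ->.
  exists (fun j => val ((linfun (mul_row (g j) (a j) b))^-1%VF (us j))) => t.
  rewrite sum_ffunE raddf_sum /=; apply: eq_bigr => j _.
  rewrite -{1}(limg_lfunVK (us_img j isT)) lfunE.
  exact: (mul_rowE _ _ (g_e j t) (ab j)).
move=> v_sub; have v_homog t : val (v t) \is b.-homog by exact: dhomog_is_dhomog.
have [h [h_homog v_eq]] := in_submod_homog g_e v_homog v_sub.
have h_a j : h j \is (a j).-homog by have := h_homog j; rewrite -(ab j) addnK.
have -> : v = \sum_j mul_row (g j) (a j) b (DHomog (h_a j)).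
  apply/ffunP => t; apply: val_inj.
  rewrite v_eq sum_ffunE raddf_sum /=; apply: eq_bigr => j _.
  by rewrite (mul_rowE _ _ (g_e j t) (ab j)).
by apply: memv_sumr => j _; rewrite -lfunE memv_img ?memvf.
Qed.

End Maps.

End GradedPieces.

Section Generators.
Context {F : fieldType}.
Local Notation S := {mpoly F[3]}.

Lemma homog0_mpolyC (q : S) : q \is 0.-homog -> q = (q@_0)%:MP.
Proof.
move=> q0; apply/mpolyP => mm; rewrite mcoeffC.
have [-> | mm_ne0] := eqVneq mm 0%MM; first by rewrite mulr1.
by rewrite mulr0 (dhomog_nemf_coeff q0) // mdeg_eq0.
Qed.

Lemma syz_in_submod k n l (g : 'I_k -> 'I_n -> S) (B : 'I_n -> 'I_l -> S) v :
  (forall j, syz B (g j)) -> in_submod g v -> syz B v.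
Proof.
move=> g_syz [h v_eq] t'.
under eq_bigr => t _ do rewrite v_eq mulr_suml.
rewrite exchange_big big1 // => j _.
by under eq_bigr => t _ do rewrite -mulrA; rewrite -mulr_sumr g_syz mulr0.
Qed.

Lemma irredundant_neq0 {k n} {g : 'I_k -> 'I_n -> S} :
  irredundant g -> forall j, exists t, g j t != 0.
Proof.
move=> g_irr j; apply/existsP; apply: contraT; rewrite negb_exists => /forallP g0.
case: (g_irr j); exists (fun _ => 0); split=> // t.
by rewrite big1 ?(eqP (negPn (g0 t))) // => i _; rewrite mul0r.
Qed.

(* A syzygy coefficient which is a nonzero constant would express one
   generator through the others. *)
Lemma irredundant_syz_const {k n} {g : 'I_k -> 'I_n -> S} {s i} :
  irredundant g -> syz g s -> s i \is 0.-homog -> s i = 0.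
Proof.
move=> g_irr s_syz /homog0_mpolyC si_C; apply: contraTeq isT => si_ne0.
set c := (s i)@_0 in si_C.
have c_ne0 : c != 0.
  by apply: contraNneq si_ne0 => c0; rewrite si_C c0 mpolyC0.
case: (g_irr i); exists (fun j => if j == i then 0 else - (c^-1)%:MP * s j).
split=> [|t]; first by rewrite eqxx.
have := s_syz t; rewrite (bigD1 i) //= si_C mul_mpolyC => /eqP; rewrite addr_eq0.
move=> /eqP/(congr1 (fun x => c^-1 *: x)); rewrite scalerA mulVf // scale1r => ->.
rewrite [RHS](bigD1 i) //= eqxx mul0r add0r scalerN scaler_sumr -sumrN.
by apply: eq_bigr => j /negbTE ->; rewrite -mul_mpolyC mulrA !mulNr.
Qed.

End Generators.

(** * The Jacobian syzygy complex *)

Section JacobianSyzygies.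
Context {F : fieldType}.
Local Notation S := {mpoly F[3]}.
Local Notation H k := (dhomog 3 F k).

Context {f : S} {d r m M : nat} {rho : 'I_m -> 'I_3 -> S}
  {sigma : 'I_M -> 'I_m -> S} {eps : nat -> nat}.
Hypothesis f_homog : f \is d.-homog.
Hypothesis rho_gen : generates (D0 f) rho.
Hypothesis rho_homog : forall j, hom_vec r (rho j).
Hypothesis sigma_gen : generates (syz rho) sigma.
Hypothesis sigma_homog : forall j : 'I_M, hom_vec (eps j) (sigma j).

(* The gradient of [f] as a 3 x 1 matrix, whose syzygies form D_0(f). *)
Definition gradient (t : 'I_3) (_ : 'I_1) := mderiv t f.

Lemma gradient_homog t i : gradient t i \is d.-1.-homog.
Proof. exact: mderiv_homog. Qed.

Lemma syz_gradient v : syz gradient v <-> D0 f v.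
Proof. by split=> [/(_ ord0) | D0v i]. Qed.

Definition jacobian_map p := linfun (mul_mx gradient p (p + d.-1)).
Definition rho_map p := linfun (mul_mx rho p (p + r)).
Definition sigma_map p j := linfun (mul_row (sigma j) (p - eps j) p).

Lemma mem_limg_jacobian p (v : {ffun 'I_1 -> H (p + d.-1)}) :
  reflect (in_jac f (val (v ord0))) (v \in limg (jacobian_map p)).
Proof.
rewrite limg_mul_mx.
apply: (iffP (mem_sum_limg_mul_row (a := fun=> p) (e := fun=> d.-1)
               gradient_homog (fun=> erefl))).
  by case=> h v_eq; exists h; apply: v_eq.
by case=> g v_eq; exists g => i; rewrite ord1.
Qed.

Lemma lker_jacobian p : lker (jacobian_map (p + r)) = limg (rho_map p).
Proof.
have rho_sub (a : {ffun 'I_3 -> H (p + r)}) :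
    reflect (in_submod rho (fun t => val (a t)))
    (a \in (\sum_j limg (linfun (mul_row (rho j) p (p + r))))%VS).
  exact: (mem_sum_limg_mul_row (e := fun=> r) (fun j t => rho_homog j t)).
apply/vspaceP => a; rewrite limg_mul_mx.
apply/idP/idP => [/(mem_lker_mul_mx gradient_homog erefl) | /rho_sub a_sub].
  by move/syz_gradient/(proj2 rho_gen)/rho_sub.
apply/(mem_lker_mul_mx gradient_homog erefl).
by apply: syz_in_submod a_sub => j; apply/syz_gradient; apply: (proj1 rho_gen).
Qed.

Lemma dim_limg_jacobian {p tau} : quot_dim f (p + d.-1) tau ->
  (tau + \dim (limg (jacobian_map p)))%N = 'C(p + d.-1 + 2, p + d.-1).
Proof.
case=> q [q_homog [q_span q_free]].
pose qq : tau.-tuple {ffun 'I_1 -> H (p + d.-1)} :=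
  [tuple [ffun=> DHomog (q_homog i)] | i < tau].
have val_comb (c : 'I_tau -> F) :
    val ((\sum_i c i *: qq`_i) ord0) = \sum_i c i *: q i.
  rewrite sum_ffunE raddf_sum; apply: eq_bigr => i _.
  by rewrite ffunE -tnth_nth tnth_mktuple ffunE.
have qq_free : free qq.
  apply/freeP => c c0 i; apply: (q_free c) => //.
  rewrite -val_comb c0 ffunE; exists (fun=> 0).
  by rewrite big1 // => t _; rewrite mul0r.
have qq_cap : (<<qq>> :&: limg (jacobian_map p) = 0)%VS.
  apply/eqP; rewrite -subv0; apply/subvP => v; rewrite memv_cap memv0.
  case/andP => /coord_span -> /mem_limg_jacobian.
  rewrite val_comb => /q_free c0; apply/eqP.
  by rewrite big1 // => i _; rewrite c0 scale0r.
have qq_sum : (<<qq>> + limg (jacobian_map p))%VS = fullv.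
  apply/eqP; rewrite eqEsubv subvf /=; apply/subvP => w _.
  have [c w_c] := q_span _ (dhomog_is_dhomog (w ord0)).
  rewrite -(subrK (\sum_i c i *: qq`_i) w) addrC; apply: memv_add.
    by apply: rpred_sum => i _; apply/memvZ/memv_span/mem_nth; rewrite size_tuple.
  by apply/mem_limg_jacobian; rewrite !ffunE raddfB /= val_comb.
rewrite -[RHS]mul1n -(@dim_ffun_dhomog F) -dimvf -qq_sum dimv_disjoint_sum //.
by rewrite (eqP qq_free) size_tuple.
Qed.

Lemma hilbert_function {p tau} : quot_dim f (p + r + d.-1) tau ->
  (tau + 3 * 'C(p + r + 2, p + r) + \dim (lker (rho_map p))
   = 'C(p + r + d.-1 + 2, p + r + d.-1) + m * 'C(p + 2, p))%N.
Proof.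
move=> tau_dim; have := dim_limg_jacobian tau_dim.
have := dim_lker_limg (jacobian_map (p + r)); rewrite lker_jacobian.
have := dim_lker_limg (rho_map p); rewrite !dim_ffun_dhomog; lia.
Qed.

Lemma sum_sigma_mapE p (u : forall j : 'I_M, H (p - eps j)) t :
  (forall j : 'I_M, eps j <= p)%N ->
  val ((\sum_j sigma_map p j (u j)) t) = \sum_j val (u j) * sigma j t.
Proof.
move=> le_eps; rewrite sum_ffunE raddf_sum; apply: eq_bigr => j _.
by rewrite lfunE; apply: (mul_rowE _ _ (sigma_homog j t)); rewrite subnK.
Qed.

Lemma lker_rho_map p : (forall j : 'I_M, eps j <= p)%N ->
  lker (rho_map p) = (\sum_j limg (sigma_map p j))%VS.
Proof.
move=> le_eps; apply/vspaceP => h.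
have sigma_sub : reflect (in_submod sigma (fun i => val (h i)))
    (h \in (\sum_j limg (sigma_map p j))%VS).
  exact: (mem_sum_limg_mul_row (e := eps) (fun j t => sigma_homog j t)
            (fun j => subnK (le_eps j))).
have rho_lker := mem_lker_mul_mx (h := h) (fun j t => rho_homog j t) erefl.
apply/idP/idP => [/rho_lker/(proj2 sigma_gen)/sigma_sub // | /sigma_sub h_sub].
by apply/rho_lker; apply: syz_in_submod h_sub; apply: (proj1 sigma_gen).
Qed.

Definition sigma_independent p := forall s : 'I_M -> S,
  (forall j : 'I_M, s j \is (p - eps j).-homog) -> syz sigma s ->
  forall j, s j = 0.

Lemma dim_lker_rho_map {p} :
  (forall j : 'I_M, eps j <= p)%N -> sigma_independent p ->
  \dim (lker (rho_map p)) = (\sum_(j < M) 'C(p - eps j + 2, p - eps j))%N.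
Proof.
move=> le_eps indep; rewrite lker_rho_map //.
rewrite (@dimv_sum_limg_free _ _ (fun j : 'I_M => H (p - eps j)) _ (sigma_map p))
  // => u u0 j.
apply: val_inj; apply: (indep (fun j => val (u j))) => [i | t].
  exact: dhomog_is_dhomog.
by have := sum_sigma_mapE p u t le_eps; rewrite u0 ffunE => <-.
Qed.

Lemma dim_lker_rho_map_relation {p p0 s j0} : irredundant sigma ->
  (forall j : 'I_M, eps j <= p0)%N -> (p0 <= p)%N ->
  (forall j : 'I_M, s j \is (p0 - eps j).-homog) -> syz sigma s -> s j0 != 0 ->
  (\dim (lker (rho_map p)) + 'C(p - p0 + 2, p - p0)
     <= \sum_(j < M) 'C(p - eps j + 2, p - eps j))%N.
Proof.
move=> sigma_irr le_eps le_p0 s_homog s_syz s_j0.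
have le_eps_p (j : 'I_M) : (eps j <= p)%N := leq_trans (le_eps j) le_p0.
rewrite lker_rho_map //.
pose nu j := linfun (mul_dhomog (s j) (p - p0) (p - eps j)).
have nuE j g : val (nu j g) = val g * s j.
  by rewrite lfunE; apply: (mul_dhomogE g (s_homog j)); have := le_eps j; lia.
apply: (@dimv_sum_limg_relation _ _ (fun j : 'I_M => H (p - eps j)) _
         (sigma_map p) _ nu j0).
  move=> w; apply/ffunP => t; apply: val_inj; rewrite sum_sigma_mapE // ffunE /=.
  under eq_bigr => j _ do rewrite nuE -mulrA.
  by rewrite -mulr_sumr s_syz mulr0.
apply/eqP; rewrite -subv0; apply/subvP => w; rewrite memv_ker memv0 comp_lfunE.
have [t sigma_t] := irredundant_neq0 sigma_irr j0.
move/eqP/(congr1 (fun v : {ffun 'I_m -> H p} => val (v t))).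
rewrite lfunE (mul_rowE _ _ (sigma_homog j0 t)) ?subnK // nuE ffunE /= => /eqP.
by rewrite !mulf_eq0 (negbTE s_j0) (negbTE sigma_t) !orbF.
Qed.

Lemma eps_gt0 (j : 'I_M) : irredundant rho -> irredundant sigma -> (0 < eps j)%N.
Proof.
move=> rho_irr sigma_irr; rewrite lt0n; apply/eqP => eps0.
have [t] := irredundant_neq0 sigma_irr j; apply/negP; rewrite negbK; apply/eqP.
have := sigma_homog j t; rewrite eps0 => sigma_t_const.
exact: (irredundant_syz_const rho_irr (proj1 sigma_gen j) sigma_t_const).
Qed.

Hypothesis m_eq : m = (M + 2)%N.

Lemma sum_bin_add2_le p :
  (\sum_(j < M) 'C(p - eps j + 2, p - eps j) <= M * 'C(p + 2, p))%N.
Proof.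
rewrite -[M in (M * _)%N]card_ord -sum_nat_const.
by apply: leq_sum => j _; apply: leq_bin_add2; apply: leq_subr.
Qed.

(* A nonzero relation among the sigma_j in degree p0 would make the Hilbert
   function of M(f) grow quadratically, whereas it is eventually tau. *)
Lemma sigma_independent_from {tau p0} : irredundant sigma ->
  tjurina_number f tau -> (forall j : 'I_M, eps j <= p0)%N ->
  sigma_independent p0.
Proof.
move=> sigma_irr [k0 tau_dim] le_eps s s_homog s_syz j0.
apply/eqP; apply: contraT => s_j0.
have [q outgrow] := bin_add2_outgrows tau r (p0 + k0).
set p := (p0 + k0 + q)%N in outgrow.
have [le_k0 le_p0 le_q] : [/\ k0 <= p + r + d.-1, p0 <= p & q <= p - p0]%N.
  by rewrite /p; split; lia.
have hilb := hilbert_function (tau_dim _ le_k0).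
have rel := dim_lker_rho_map_relation sigma_irr le_eps le_p0 s_homog s_syz s_j0.
have := sum_bin_add2_le p; have := leq_bin_add2 le_q.
have := @leq_bin_add2 p (p + r + d.-1) ltac:(lia).
have : (m * 'C(p + 2, p) = M * 'C(p + 2, p) + 2 * 'C(p + 2, p))%N.
  by rewrite m_eq mulnDl.
clearbody p; lia.
Qed.

Lemma hilbert_polynomial {tau} : irredundant sigma -> tjurina_number f tau ->
  exists P, forall p, (P <= p)%N ->
    (2 * tau + 3 * ((p + r + 2) * (p + r + 1)) + \sum_(j < M) eps j ^ 2
     = (p + r + d.-1 + 2) * (p + r + d.-1 + 1) + 2 * ((p + 2) * (p + 1))
       + (2 * p + 3) * \sum_(j < M) eps j)%N.
Proof.
move=> sigma_irr tau_fin; have [k0 tau_dim] := tau_fin.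
exists (\sum_(j < M) eps j + k0)%N => p le_Pp.
have le_eps (j : 'I_M) : (eps j <= p)%N.
  have : (eps j <= \sum_(i < M) eps i)%N by rewrite (bigD1 j) //= leq_addr.
  by lia.
have := hilbert_function (tau_dim (p + r + d.-1)%N ltac:(lia)).
have indep := sigma_independent_from sigma_irr tau_fin le_eps.
rewrite (dim_lker_rho_map le_eps indep).
have shift : (2 * \sum_(j < M) 'C(p - eps j + 2, p - eps j)
              + (2 * p + 3) * \sum_(j < M) eps j
              = M * ((p + 2) * (p + 1)) + \sum_(j < M) eps j ^ 2)%N.
  rewrite !big_distrr -big_split /=.
  under eq_bigr => j _ do rewrite double_bin_add2_sub //.
  by rewrite big_split /= sum_nat_const card_ord.
have := double_bin_add2 (p + r); have := double_bin_add2 (p + r + d.-1).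
have := double_bin_add2 p.
have : (m * 'C(p + 2, p) = M * 'C(p + 2, p) + 2 * 'C(p + 2, p))%N.
  by rewrite m_eq mulnDl.
nia.
Qed.

End JacobianSyzygies.

Lemma tjurina_value {tau d r E1 E2 k} : (3 <= d)%N -> (E1 + d.-1 = 2 * r)%N ->
  (2 * tau + 3 * ((r + 2) * (r + 1)) + E2
   = (r + d.-1 + 2) * (r + d.-1 + 1) + 4 + 3 * E1)%N ->
  E2 = (E1 + 2 * k)%N ->
  tau%:Z = ((d * (d - 1)) %/ 2)%N%:Z + r%:Z * (d%:Z - r%:Z - 2) - k%:Z.
Proof.
move=> d_ge3 E1_eq tau_eq E2_eq.
rewrite subn1 divn2 -bin2; have := mul_bin_left d 1; rewrite bin1 subn1.
case: d d_ge3 E1_eq tau_eq => [|D] //= _ E1_eq tau_eq; lia.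
Qed.

Theorem theorem3p4 (R : realType) (f : {mpoly R[i][3]}) (d r m : nat)
  (rho : 'I_m -> 'I_3 -> {mpoly R[i][3]})
  (sigma : 'I_(m - 2) -> 'I_m -> {mpoly R[i][3]})
  (eps : nat -> nat) (tau : nat) :
  (3 <= d)%N ->
  reduced f ->
  ~ lines_through_point f d ->
  curve_type f d r m ->
  min_gens_D0 f r m rho ->
  (3 < m)%N ->
  ((2 * r)%N%:Z - d%:Z + 3) - m%:Z = 3 ->
  generates (syz rho) sigma ->
  irredundant sigma ->
  (forall j : 'I_(m - 2), hom_vec (eps j) (sigma j)) ->
  (forall i j : nat, (i <= j)%N -> (j < m - 2)%N -> (eps i <= eps j)%N) ->
  tjurina_number f tau ->
  let base : int := ((d * (d - 1)) %/ 2)%N%:Z + r%:Z * (d%:Z - r%:Z - 2) in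
  (eps (m - 3)%N = 4%N /\ (forall j, (j < m - 3)%N -> eps j = 1%N)
     /\ tau%:Z = base - 6)
  \/
  (eps (m - 3)%N = 3%N /\ eps (m - 4)%N = 2%N
     /\ (forall j, (j < m - 4)%N -> eps j = 1%N) /\ tau%:Z = base - 4)
  \/
  ((4 < m)%N /\ eps (m - 3)%N = 2%N /\ eps (m - 4)%N = 2%N /\ eps (m - 5)%N = 2%N
     /\ (forall j, (j < m - 5)%N -> eps j = 1%N) /\ tau%:Z = base - 3).
Proof.
move=> d_ge3 _ _ [f_homog _] [rho_gen [rho_irr rho_homog]] m_gt3 delta
  sigma_gen sigma_irr sigma_homog eps_mono tau_fin base.
have m_eq : m = (m - 2 + 2)%N by lia.
have [P hilb] := hilbert_polynomial f_homog rho_gen rho_homog sigma_gen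
  sigma_homog m_eq sigma_irr tau_fin.
have [sum_eps tau_eq] := hilbert_polynomial_coeffs hilb.
rewrite -!(big_mkord xpredT) in sum_eps tau_eq.
rewrite -(big_mkord xpredT (fun j => eps j ^ 2)%N) in tau_eq.
have sum_eps3 : (\sum_(0 <= j < m - 2) eps j = m - 2 + 3)%N by lia.
have tau_val k : (\sum_(0 <= j < m - 2) eps j ^ 2 = m - 2 + 3 + 2 * k)%N ->
    tau%:Z = base - k%:Z.
  by rewrite -sum_eps3; apply: tjurina_value d_ge3 sum_eps tau_eq.
have eps_pos j (lt_j : (j < m - 2)%N) : (0 < eps j)%N :=
  eps_gt0 sigma_gen sigma_homog (Ordinal lt_j) rho_irr sigma_irr.
have m2_ge2 : (2 <= m - 2)%N by lia.
have [-> -> ->] : [/\ m - 3 = m - 2 - 1, m - 4 = m - 2 - 2 & m - 5 = m - 2 - 3]%N.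
  by split; lia.
case: (partition_excess3 eps_mono eps_pos m2_ge2 sum_eps3)
  => [[top [ones sq]] | [[top [next [ones sq]]]
     | [n_ge3 [top [next [next2 [ones sq]]]]]]].
- by left; do 2 split=> //; apply: tau_val; lia.
- by right; left; do 3 split=> //; apply: tau_val; lia.
- by right; right; split; [lia | do 4 split=> //; apply: tau_val; lia].
Qed.
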